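(* Let $t$ be a term and $\vec x=x_1\dots x_n$ a vector of pairwise distinct program variables. Suppose (Det) $\vec x(1)=\vec x(2)\vdash\mathrm{wp}\,[1:t,2:t]\,\{\vec x(1)=\vec x(2)\}$, and (Idem) for every $\vec v\in\mathbb{Z}^n$, $\vec x(2)=\vec v\vdash\mathrm{wp}\,[1:t,2:t]\,\{\vec x(1)=\vec v\Rightarrow\vec x(2)=\vec v\}$. Then for every $\vec v\in\mathbb{Z}^n$, $$\vec x(1)=\vec x(2)\wedge\vec x(3)=\vec v\ \vdash\ \mathrm{wp}\,[1:t,2:t,3:t]\,\{\vec x(2)=\vec v\Rightarrow\vec x(1)=\vec x(3)\}.$$
   Context: Setting. $\mathrm{Val}=\mathbb{Z}$; $\mathrm{PVar}$ is a countably infinite set of program variables; a store is a function $s:\mathrm{PVar}\to\mathrm{Val}$; indices are $\mathrm{Idx}=\mathbb{N}$. Terms of a first-order imperative language are generated by $t ::= v \mid x \mid * \mid t\oplus t \mid \mathtt{skip}\mid x:=t \mid t;t \mid \mathtt{if}\ t\ \mathtt{then}\ t\ \mathtt{else}\ t \mid \mathtt{while}\ t\ \mathtt{do}\ t$, with a nondeterministic big-step semantics $t,s\Downarrow v,s'$ ($t$ run from $s$ may terminate with return value $v$ and final store $s'$). A hyper-term is a finitely supported partial map from $\mathrm{Idx}$ to terms, written $[i_1:t_1,\dots,i_n:t_n]$; a hyper-store is a total function $\mathbf s:\mathrm{Idx}\to\mathrm{Store}$. $\mathbf t,\mathbf s\Downarrow\mathbf v,\mathbf s'$ holds iff for every $i\in\mathrm{supp}(\mathbf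 t)$, $\mathbf t(i),\mathbf s(i)\Downarrow\mathbf v(i),\mathbf s'(i)$, and for every $i\notin\mathrm{supp}(\mathbf t)$, $\mathbf s'(i)=\mathbf s(i)$. A hyper-assertion is a predicate on hyper-stores; connectives are pointwise; $P\vdash R$ means $\forall\mathbf s.\ P(\mathbf s)\Rightarrow R(\mathbf s)$. $\mathrm{wp}\,\mathbf t\,\{Q\}(\mathbf s):\iff\forall\mathbf v,\mathbf s'.\ (\mathbf t,\mathbf s\Downarrow\mathbf v,\mathbf s')\Rightarrow Q(\mathbf s')$ for a hyper-assertion $Q$. $\vec x(i)=\vec v$ is the hyper-assertion $\forall k.\ \mathbf s(i)(x_k)=v_k$, and $\vec x(i)=\vec x(j)$ is $\forall k.\ \mathbf s(i)(x_k)=\mathbf s(j)(x_k)$. *)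

From Stdlib Require Import ZArith List.
Import ListNotations.
Open Scope Z_scope.

Definition Val := Z.
Definition PVar := nat.
Definition Store := PVar -> Val.
Definition Idx := nat.

(* Binary operators t ⊕ t are modelled by an arbitrary function Z -> Z -> Z. *)
Inductive term : Type :=
| TVal (v : Val)
| TVar (x : PVar)
| TStar
| TOp (op : Val -> Val -> Val) (t1 t2 : term)
| TSkip
| TAssign (x : PVar) (t : term)
| TSeq (t1 t2 : term)
| TIf (c t1 t2 : term)
| TWhile (c t : term).

Definition upd (s : Store) (x : PVar) (v : Val) : Store :=
  fun y => if Nat.eqb y x then v else s y.

(* Nondeterministic big-step semantics  t, s ⇓ v, s'.
   Conventions: 0 is false, nonzero is true; skip and while return 0;
   an assignment returns the assigned value; t1;t2 returns the value of t2. *)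
Inductive bigstep : term -> Store -> Val -> Store -> Prop :=
| BS_Val v s : bigstep (TVal v) s v s
| BS_Var x s : bigstep (TVar x) s (s x) s
| BS_Star v s : bigstep TStar s v s
| BS_Op op t1 t2 s s1 s2 v1 v2 :
    bigstep t1 s v1 s1 -> bigstep t2 s1 v2 s2 ->
    bigstep (TOp op t1 t2) s (op v1 v2) s2
| BS_Skip s : bigstep TSkip s 0 s
| BS_Assign x t s s' v :
    bigstep t s v s' -> bigstep (TAssign x t) s v (upd s' x v)
| BS_Seq t1 t2 s s1 s2 v1 v2 :
    bigstep t1 s v1 s1 -> bigstep t2 s1 v2 s2 -> bigstep (TSeq t1 t2) s v2 s2
| BS_IfT c t1 t2 s s1 s2 vc v :
    bigstep c s vc s1 -> vc <> 0 -> bigstep t1 s1 v s2 ->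
    bigstep (TIf c t1 t2) s v s2
| BS_IfF c t1 t2 s s1 s2 v :
    bigstep c s 0 s1 -> bigstep t2 s1 v s2 ->
    bigstep (TIf c t1 t2) s v s2
| BS_WhileF c t s s1 :
    bigstep c s 0 s1 -> bigstep (TWhile c t) s 0 s1
| BS_WhileT c t s s1 s2 s3 vc vb v :
    bigstep c s vc s1 -> vc <> 0 -> bigstep t s1 vb s2 ->
    bigstep (TWhile c t) s2 v s3 -> bigstep (TWhile c t) s v s3.

(* Hyper-terms: (finitely supported) partial maps Idx -> term,
   given here by a finite list of (index, term) pairs. *)
Definition hterm := Idx -> option term.
Definition HStore := Idx -> Store.
Definition HVal := Idx -> Val.

Fixpoint hterm_of (l : list (Idx * term)) : hterm :=
  fun i => match l with
           | [] => None
           | (j, t) :: l' => if Nat.eqb i j then Some t else hterm_of l' i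
           end.

Definition hbigstep (ht : hterm) (hs : HStore) (hv : HVal) (hs' : HStore) : Prop :=
  forall i, match ht i with
            | Some t => bigstep t (hs i) (hv i) (hs' i)
            | None => hs' i = hs i
            end.

Definition hassn := HStore -> Prop.

Definition entails (P R : hassn) : Prop := forall hs, P hs -> R hs.

Definition wp (ht : hterm) (Q : hassn) : hassn :=
  fun hs => forall hv hs', hbigstep ht hs hv hs' -> Q hs'.

Definition hand (P Q : hassn) : hassn := fun hs => P hs /\ Q hs.
Definition himp (P Q : hassn) : hassn := fun hs => P hs -> Q hs.

Definition vars_eq_vals (xs : list PVar) (i : Idx) (vs : list Val) : hassn :=
  fun hs => forall k, (k < length xs)%nat -> hs i (nth k xs O) = nth k vs 0.

Definition vars_eq (xs : list PVar) (i j : Idx) : hassn :=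
  fun hs => forall k, (k < length xs)%nat -> hs i (nth k xs O) = hs j (nth k xs O).

(* Run the three copies of [t] from stores [s1], [s2], [s3] with [s1 ~ s2] on [xs] and
   [s3 = vs] on [xs], ending in [s1'], [s2'], [s3'] with [s2' = vs].  Pairing runs 1 and 2,
   determinism gives [s1' ~ s2'], so [s1' = vs].  Pairing runs 1 and 3, idempotence
   (with [s3] in the role of the second copy) turns [s1' = vs] into [s3' = vs].
   Hence [s1' ~ s3']. *)

From Stdlib Require Import ZArith List.
Import ListNotations.

(* [vars_eq xs 1 2 (hsel d s1 s2)] and [vars_eq_vals xs 1 vs (hsel d s1 s2)] are
   convertible to [agree_on xs s1 s2] and [has_vals xs s1 vs]. *)
Definition agree_on (xs : list PVar) (s1 s2 : Store) : Prop :=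
  forall k, (k < length xs)%nat -> s1 (nth k xs O) = s2 (nth k xs O).

Definition has_vals (xs : list PVar) (s : Store) (vs : list Val) : Prop :=
  forall k, (k < length xs)%nat -> s (nth k xs O) = nth k vs 0.

Definition hsel (d : HStore) (s1 s2 : Store) : HStore :=
  fun i => if Nat.eqb i 1 then s1 else if Nat.eqb i 2 then s2 else d i.

Lemma hbigstep_component {l : list (Idx * term)} {t : term} (i : Idx)
    {hs : HStore} {hv : HVal} {hs' : HStore} :
  hbigstep (hterm_of l) hs hv hs' -> hterm_of l i = Some t ->
  bigstep t (hs i) (hv i) (hs' i).
Proof. intros Hb Hi. specialize (Hb i). now rewrite Hi in Hb. Qed.

Lemma hbigstep_pair {t : term} (d : HStore) {s1 s2 s1' s2' : Store} {v1 v2 : Val} :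
  bigstep t s1 v1 s1' -> bigstep t s2 v2 s2' ->
  hbigstep (hterm_of [(1%nat, t); (2%nat, t)]) (hsel d s1 s2)
    (fun i => if Nat.eqb i 1 then v1 else v2) (hsel d s1' s2').
Proof. intros B1 B2 [|[|[|i]]]; cbn; auto. Qed.

Lemma wp_pair_run {t : term} {Q : hassn} {d : HStore} {s1 s2 s1' s2' : Store}
    {v1 v2 : Val} :
  wp (hterm_of [(1%nat, t); (2%nat, t)]) Q (hsel d s1 s2) ->
  bigstep t s1 v1 s1' -> bigstep t s2 v2 s2' -> Q (hsel d s1' s2').
Proof. intros Hwp B1 B2. exact (Hwp _ _ (hbigstep_pair d B1 B2)). Qed.

Theorem mainTheorem19 (t : term) (xs : list PVar) :
  NoDup xs ->
  entails (vars_eq xs 1%nat 2%nat) (wp (hterm_of [(1%nat, t); (2%nat, t)]) (vars_eq xs 1%nat 2%nat)) ->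
  (forall vs : list Val, length vs = length xs ->
     entails (vars_eq_vals xs 2%nat vs)
       (wp (hterm_of [(1%nat, t); (2%nat, t)])
           (himp (vars_eq_vals xs 1%nat vs) (vars_eq_vals xs 2%nat vs)))) ->
  forall vs : list Val, length vs = length xs ->
    entails (hand (vars_eq xs 1%nat 2%nat) (vars_eq_vals xs 3%nat vs))
      (wp (hterm_of [(1%nat, t); (2%nat, t); (3%nat, t)])
          (himp (vars_eq_vals xs 2%nat vs) (vars_eq xs 1%nat 3%nat))).
Proof.
  intros _ Det Idem vs Hlen hs [H12 H3] hv hs' Hb H2'.
  pose proof (hbigstep_component 1%nat Hb eq_refl) as B1.
  pose proof (hbigstep_component 2%nat Hb eq_refl) as B2.
  pose proof (hbigstep_component 3%nat Hb eq_refl) as B3.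
  assert (D12 : agree_on xs (hs' 1%nat) (hs' 2%nat))
    by exact (wp_pair_run (Det (hsel hs (hs 1%nat) (hs 2%nat)) H12) B1 B2).
  assert (V1 : has_vals xs (hs' 1%nat) vs).
  { intros k Hk. rewrite (D12 k Hk). exact (H2' k Hk). }
  assert (V3 : has_vals xs (hs' 3%nat) vs)
    by exact (wp_pair_run (Idem vs Hlen (hsel hs (hs 1%nat) (hs 3%nat)) H3) B1 B3 V1).
  intros k Hk. now rewrite (V1 k Hk), (V3 k Hk).
Qed.
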